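(* Let $b_\omega$ be a highest weight element of the spinor crystal $B_S$ (i.e. $b_\omega=b_{\Lambda_{n-1}}$ or $b_\omega=b_{\Lambda_n}$). Let $i_1,\dots,i_m\in I$ be such that $\tilde f_{i_m}\cdots\tilde f_{i_2}\tilde f_{i_1}b_\omega\neq0$. Let $\Phi:B(\infty)\hookrightarrow B(\infty)\otimes B_{i_1}\otimes\cdots\otimes B_{i_m}$ be the composition $\Phi=(\Psi_{i_1}\otimes1)\circ\cdots\circ(\Psi_{i_{m-1}}\otimes 1)\circ\Psi_{i_m}$ (first $\Psi_{i_m}:B(\infty)\to B(\infty)\otimes B_{i_m}$, then $\Psi_{i_{m-1}}$ applied to the $B(\infty)$ factor, etc.). Then $$\Phi(\tilde f^*_{i_m}\cdots\tilde f^*_{i_2}\tilde f^*_{i_1}b_\infty)=b_\infty\otimes b_{i_1}(-1)\otimes b_{i_2}(-1)\otimes\cdots\otimes b_{i_m}(-1)$$ and $$\Phi(\tilde f_{i_1}\tilde f_{i_2}\cdots\tilde f_{i_m}b_\infty)=b_\infty\otimes b_{i_1}(-1)\otimes b_{i_2}(-1)\otimes\cdots\otimes b_{i_m}(-1).$$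
   Context: Let $\mathfrak g$ be of type $D_n$ with index set $I=\{1,\dots,n\}$, simple roots $\alpha_j=\epsilon_j-\epsilon_{j+1}$ ($j<n$), $\alpha_n=\epsilon_{n-1}+\epsilon_n$. The spinor crystal $B_S$ is the set of sign vectors $(i_1,\dots,i_n)$ with weight $\frac12\sum i_j\epsilon_j$; for $j<n$, $\tilde f_j$ turns $(i_j,i_{j+1})=(+,-)$ into $(-,+)$ (else $0$), $\tilde e_j$ the reverse; $\tilde f_n$ turns $(i_{n-1},i_n)=(+,+)$ into $(-,-)$ (else $0$), $\tilde e_n$ the reverse; its highest weight elements are $b_{\Lambda_{n-1}}=(+,\dots,+,-)$ and $b_{\Lambda_n}=(+,\dots,+)$. (Generalized) crystals: sets with $\mathrm{wt},\varepsilon_i,\varphi_i\in\mathbb Z\sqcup\{-\infty\}$, $\tilde e_i,\tilde f_i$ satisfying Kashiwara's axioms; tensor product: $\mathrm{wt}$ adds, $\varepsilon_i(a\otimes b)=\max(\varepsilon_i(a),\varepsilon_i(b)-\langle\mathrm{wt}\,a,\alpha_i^\vee\rangle)$, $\varphi_i(a\otimes b)=\max(\varphi_i(b),\varphi_i(a)+\langle\mathrm{wt}\,b,\alpha_i^\vee\rangle)$, $\tilde e_i(a\otimes b)=a\otimes\tilde e_ib$ if $\varepsilon_i(b)>\varphi_i(a)$, else $\tilde e_ia\otimes b$; $\tilde f_i(a\otimes b)=a\otimes\tilde f_ib$ if $\varepsilon_i(b)\ge\varphi_i(a)$, else $\tilde f_ia\otimes b$. $B(\infty)$ is Kashiwara's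 crystal of $U_q^-(\mathfrak g)$ with weight-$0$ element $b_\infty$, $\varepsilon_i(b)=\max\{k:\tilde e_i^kb\ne0\}$, $\varphi_i(b)=\varepsilon_i(b)+\langle\alpha_i^\vee,\mathrm{wt}\, b\rangle$; $*$ is Kashiwara's involution on $B(\infty)$ and $\tilde f_i^*(b)=(\tilde f_i(b^* ))^*$. For $i\in I$, $B_i=\{b_i(k):k\in\mathbb Z\}$ with $\mathrm{wt}(b_i(k))=k\alpha_i$, $\varphi_i(b_i(k))=k$, $\varepsilon_i(b_i(k))=-k$, $\varphi_j=\varepsilon_j=-\infty$ for $j\neq i$, $\tilde e_ib_i(k)=b_i(k+1)$, $\tilde f_ib_i(k)=b_i(k-1)$, $\tilde e_j=\tilde f_j=0$ for $j\ne i$. $\Psi_i:B(\infty)\hookrightarrow B(\infty)\otimes B_i$ is Kashiwara's unique strict crystal embedding with $\Psi_i(b_\infty)=b_\infty\otimes b_i(0)$. *)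

From HB Require Import structures.
From mathcomp Require Import all_boot all_order all_algebra.
Set Implicit Arguments. Unset Strict Implicit. Unset Printing Implicit Defensive.
Import Order.TTheory GRing.Theory Num.Theory.
Local Open Scope ring_scope.

(* Index set I = {1,...,n} is encoded as 'I_n (index j : 'I_n stands for j+1). *)

(* Simple roots in epsilon-coordinates:
   alpha_j = eps_j - eps_{j+1} (j < n-1, 0-indexed), alpha_{n-1} = eps_{n-2} + eps_{n-1}. *)
Definition alpha (n : nat) (i k : 'I_n) : int :=
  if (i.+1 < n)%N then ((k == i :> nat) : nat)%:Z - ((k == i.+1 :> nat) : nat)%:Z
  else ((k.+2 == n)%N : nat)%:Z + ((k.+1 == n)%N : nat)%:Z.

(* Cartan matrix <alpha_i^vee, alpha_j> (simply laced: standard inner product). *)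
Definition cartan (n : nat) (i j : 'I_n) : int := \sum_(k < n) alpha i k * alpha j k.

(* Weights of the crystals considered (B(oo), B_i and their tensor products) lie
   in the root lattice; we record them in coordinates w.r.t. the simple roots. *)
Definition weight (n : nat) := {ffun 'I_n -> int}.

Definition hpair (n : nat) (i : 'I_n) (w : weight n) : int :=
  \sum_(j < n) cartan i j * w j.

Definition shiftw (n : nat) (w : weight n) (i : 'I_n) (k : int) : weight n :=
  [ffun j => w j + (if j == i then k else 0)].

(* Z \sqcup {-oo} encoded as option int, None = -oo. *)
Definition oadd (x : option int) (k : int) : option int := omap (fun a => a + k) x.
Definition omax (x y : option int) : option int :=
  match x, y with
  | Some a, Some b => Some (Num.max a b)
  | Some a, None => Some a
  | None, y => y
  end.
Definition ogt (x y : option int) : bool :=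
  match x, y with
  | Some a, Some b => b < a
  | Some _, None => true
  | None, _ => false
  end.
Definition oge (x y : option int) : bool :=
  match x, y with
  | Some a, Some b => b <= a
  | _, None => true
  | None, Some _ => false
  end.

(* (Generalized) crystal data; the operators e~_i, f~_i return None for 0. *)
Record crystal (n : nat) := Crystal {
  ccar :> Type;
  wt : ccar -> weight n;
  eps : 'I_n -> ccar -> option int;
  phi : 'I_n -> ccar -> option int;
  et : 'I_n -> ccar -> option ccar;
  ft : 'I_n -> ccar -> option ccar }.
Arguments wt {n c}.
Arguments eps {n c}.
Arguments phi {n c}.
Arguments et {n c}.
Arguments ft {n c}.

Definition is_crystal (n : nat) (C : crystal n) : Prop :=
  forall (i : 'I_n) (b : C),
    phi i b = oadd (eps i b) (hpair i (wt b)) /\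
    (forall b', et i b = Some b' ->
       [/\ wt b' = shiftw (wt b) i 1, eps i b' = oadd (eps i b) (-1)
         & phi i b' = oadd (phi i b) 1]) /\
    (forall b', ft i b = Some b' ->
       [/\ wt b' = shiftw (wt b) i (-1), eps i b' = oadd (eps i b) 1
         & phi i b' = oadd (phi i b) (-1)]) /\
    (forall b', ft i b = Some b' <-> et i b' = Some b) /\
    (phi i b = None -> et i b = None /\ ft i b = None).

(* Tensor product (Kashiwara's convention, as in the paper). *)
Definition tensor (n : nat) (C D : crystal n) : crystal n :=
  @Crystal n (C * D)%type
    (fun p => [ffun j => wt p.1 j + wt p.2 j])
    (fun i p => omax (eps i p.1) (oadd (eps i p.2) (- hpair i (wt p.1))))
    (fun i p => omax (phi i p.2) (oadd (phi i p.1) (hpair i (wt p.2))))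
    (fun i p => if ogt (eps i p.2) (phi i p.1)
                then omap (fun b' => (p.1, b')) (et i p.2)
                else omap (fun a' => (a', p.2)) (et i p.1))
    (fun i p => if oge (eps i p.2) (phi i p.1)
                then omap (fun b' => (p.1, b')) (ft i p.2)
                else omap (fun a' => (a', p.2)) (ft i p.1)).

(* The crystal B_i = { b_i(k) : k in Z }, b_i(k) encoded as k. *)
Definition Bi (n : nat) (i : 'I_n) : crystal n :=
  @Crystal n int
    (fun k => [ffun j => if j == i then k else 0])
    (fun j k => if j == i then Some (- k) else None)
    (fun j k => if j == i then Some k else None)
    (fun j k => if j == i then Some (k + 1) else None)
    (fun j k => if j == i then Some (k - 1) else None).

Definition strict_embedding (n : nat) (C D : crystal n) (F : C -> D) : Prop :=
  injective F /\
  forall (i : 'I_n) (b : C),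
    [/\ wt (F b) = wt b, eps i (F b) = eps i b, phi i (F b) = phi i b,
        et i (F b) = omap F (et i b) & ft i (F b) = omap F (ft i b)].

Definition estar (n : nat) (C : crystal n) (star : C -> C) (i : 'I_n) (b : C)
  : option C := omap star (et i (star b)).
Definition fstar (n : nat) (C : crystal n) (star : C -> C) (i : 'I_n) (b : C)
  : option C := omap star (ft i (star b)).

(* Apply operators g_{i_1}, then g_{i_2}, ..., then g_{i_m} (i_1 first). *)
Definition opath (T : Type) (n : nat) (g : 'I_n -> T -> option T)
    (s : seq 'I_n) (x : T) : option T :=
  foldl (fun ox i => obind (g i) ox) (Some x) s.

(* Characterization of (B(oo), b_oo, *, (Psi_i)_i):
   - B is a crystal (of type D_n) and (1)-(7) of Kashiwara--Saito,
     Prop. 3.2.3 hold, with the strict embeddings Psi_i : B -> B (x) B_i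
     normalized by Psi_i(b_oo) = b_oo (x) b_i(0); this determines
     B ~= B(oo) and the Psi_i uniquely;
   - * is an involution preserving weights, and Kashiwara's formula
     Psi_i(b) = (e~_i^* )^{c} b (x) b_i(-c), c = eps_i(b^* ), holds. *)
Definition is_Binf (n : nat) (B : crystal n) (binf : B) (star : B -> B)
    (Psi : forall i : 'I_n, B -> B * int) : Prop :=
  is_crystal B /\
  (wt binf = 0 :> weight n /\ (forall b : B, wt b = 0 :> weight n -> b = binf)) /\
  (forall (b : B) (j : 'I_n), wt b j <= 0) /\
  ((forall i : 'I_n, eps i binf = Some 0) /\ (forall (i : 'I_n) (b : B), eps i b <> None)) /\
  (forall i : 'I_n,
     @strict_embedding n B (tensor B (Bi i)) (Psi i) /\ Psi i binf = (binf, 0)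
     /\ (forall b : B, (Psi i b).2 <= 0)) /\
  (forall b : B, b <> binf -> exists i : 'I_n, (Psi i b).2 < 0) /\
  (forall b : B, star (star b) = b) /\
  (forall b : B, wt (star b) = wt b) /\
  (forall (i : 'I_n) (b : B), exists c : nat,
      eps i (star b) = Some c%:Z /\
      exists b', iter c (fun ob => obind (estar star i) ob) (Some b) = Some b'
                 /\ Psi i b = (b', - c%:Z)).

(* Phi = (Psi_{i_1} (x) 1) o ... o (Psi_{i_{m-1}} (x) 1) o Psi_{i_m}:
   B -> B (x) B_{i_1} (x) ... (x) B_{i_m}; an element
   b (x) b_{i_1}(k_1) (x) ... (x) b_{i_m}(k_m) is encoded as (b, [:: k_1; ...; k_m]). *)
Fixpoint Phi_rev (n : nat) (B : Type) (Psi : 'I_n -> B -> B * int)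
    (rs : seq 'I_n) (b : B) : B * seq int :=
  match rs with
  | [::] => (b, [::])
  | i :: rs' => let p := Psi i b in
                let q := Phi_rev Psi rs' p.1 in (q.1, rcons q.2 p.2)
  end.
Definition Phi (n : nat) (B : Type) (Psi : 'I_n -> B -> B * int)
    (s : seq 'I_n) (b : B) : B * seq int := Phi_rev Psi (rev s) b.

(* Spinor crystal B_S: sign vectors, true = '+'. *)
Definition spinor (n : nat) := {ffun 'I_n -> bool}.
Definition sgn (n : nat) (s : spinor n) (k : nat) : bool :=
  if insub k is Some j then s j else false.
Definition flip2 (n : nat) (s : spinor n) (k : nat) : spinor n :=
  [ffun j : 'I_n => if (j == k :> nat) || (j == k.+1 :> nat) then ~~ s j else s j].
Definition spin_f (n : nat) (i : 'I_n) (s : spinor n) : option (spinor n) :=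
  if (i.+1 < n)%N then
    (if sgn s i && ~~ sgn s i.+1 then Some (flip2 s i) else None)
  else
    (if sgn s (n - 2) && sgn s (n - 1) then Some (flip2 s (n - 2)) else None).
Definition bLam_n (n : nat) : spinor n := [ffun _ => true].
Definition bLam_nm1 (n : nat) : spinor n := [ffun j : 'I_n => (j.+1 != n)%N].

(* Both elements are b := f_{i_1} ... f_{i_m} b_oo, and b^* = f_{i_m} ... f_{i_1} b_oo.
   Induct on m, appending i = i_m.  Psi_i sends f_i b_oo to b_oo (x) b_i(-1), and
   f_{i_{m-1}}, ..., f_{i_1} then act on the left factor only: f_j with j <> i does
   not see b_i(-1), and f_i is applied to some x with
   phi_i(x) >= <alpha_i^vee, wt x> >= 2 > eps_i(b_i(-1)).  This bound is where the
   spinor crystal enters: it is minuscule, so on the spinor path u_0 = b_omega,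
   u_k = f_{i_k} u_{k-1}, the pairing with alpha_i^vee is 1 at u_{m-1} and -1 just
   after each f_i step, and <alpha_i^vee, wt x> is the difference 1 - (-1).
   Finally Kashiwara's formula Psi_i(b) = e_i^* b (x) b_i(-1) gives b^* = f_i b'^*. *)

From HB Require Import structures.
From mathcomp Require Import all_boot all_order all_algebra.
From mathcomp Require Import zify.
Import Order.TTheory GRing.Theory Num.Theory.
Set Implicit Arguments. Unset Strict Implicit. Unset Printing Implicit Defensive.
Local Open Scope ring_scope.

Section Paths.

Variables (T : Type) (n : nat) (g : 'I_n -> T -> option T).

Lemma opath_cons (j : 'I_n) (t : seq 'I_n) (x : T) :
  opath g (j :: t) x = obind (opath g t) (g j x).
Proof. by rewrite /opath /=; case: (g j x) => //=; elim: t. Qed.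

Lemma opath_rcons (t : seq 'I_n) (j : 'I_n) (x : T) :
  opath g (rcons t j) x = obind (g j) (opath g t x).
Proof. by rewrite /opath foldl_rcons. Qed.

End Paths.

Lemma opath_map (T U : Type) (n : nat) (g : 'I_n -> T -> option T)
    (g' : 'I_n -> U -> option U) (F : T -> U) :
  (forall j x, g' j (F x) = omap F (g j x)) ->
  forall t x, opath g' t (F x) = omap F (opath g t x).
Proof.
move=> gF; elim=> [|j t IHt] x //.
by rewrite !opath_cons gF; case: (g j x) => //= y; exact: IHt.
Qed.

(* With h the running value of <alpha_i^vee, wt> along t, every f_i step of t is
   taken where it is at least 2. *)
Fixpoint pairing_ge2_before_f (n : nat) (i : 'I_n) (t : seq 'I_n) (h : int) : Prop :=
  if t is j :: t' then (j = i -> 2 <= h) /\ pairing_ge2_before_f i t' (h - cartan i j)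
  else True.

Section SpinorCrystal.

Variables (n : nat) (n_ge2 : (2 <= n)%N).

Lemma sum_indicator (g : nat -> int) (a : nat) : (a < n)%N ->
  \sum_(k < n) ((k == a :> nat) : nat)%:Z * g k = g a.
Proof.
move=> lt_an; rewrite (bigD1 (Ordinal lt_an)) //= eqxx mul1r big1 ?addr0 // => k.
by rewrite -val_eqE /= => /negbTE ->; rewrite mul0r.
Qed.

Lemma sum_alpha (i : 'I_n) (g : nat -> int) :
  \sum_(k < n) alpha i k * g k =
  if (i.+1 < n)%N then g i - g i.+1 else g (n - 2)%N + g (n - 1)%N.
Proof.
rewrite /alpha; case: ifP => lt_i1n.
  under eq_bigr do rewrite mulrBl.
  by rewrite sumrB !sum_indicator.
have eq2 k : (k.+2 == n)%N = (k == n - 2)%N by lia.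
have eq1 k : (k.+1 == n)%N = (k == n - 1)%N by lia.
under eq_bigr do rewrite eq2 eq1 mulrDl.
by rewrite big_split /= !sum_indicator //; lia.
Qed.

Lemma cartan_diag (i : 'I_n) : cartan i i = 2.
Proof.
pose a (k : nat) : int :=
  if (i.+1 < n)%N then ((k == i :> nat) : nat)%:Z - ((k == i.+1 :> nat) : nat)%:Z
  else ((k.+2 == n)%N : nat)%:Z + ((k.+1 == n)%N : nat)%:Z.
have -> : cartan i i = \sum_(k < n) alpha i k * a k by [].
rewrite sum_alpha /a; case: (i.+1 < n)%N; lia.
Qed.

Lemma sgnE (v : spinor n) (k : 'I_n) : sgn v k = v k.
Proof. by rewrite /sgn valK. Qed.

Definition spin_sign (v : spinor n) (k : nat) : int := if sgn v k then 1 else -1.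

(* Twice <alpha_i^vee, wt v>: the weights of B_S are half-integral. *)
Definition spin_pair (i : 'I_n) (v : spinor n) : int :=
  \sum_(k < n) alpha i k * spin_sign v k.

Lemma spin_sign_flip2 (u : spinor n) (m : nat) (k : 'I_n) :
  spin_sign (flip2 u m) k =
  if (k == m :> nat) || (k == m.+1 :> nat) then - spin_sign u k else spin_sign u k.
Proof.
rewrite /spin_sign !sgnE ffunE.
by case: ((k == m :> nat) || (k == m.+1 :> nat)); case: (u k).
Qed.

Lemma spin_f_pair (i : 'I_n) (u v : spinor n) :
  spin_f i u = Some v -> spin_pair i u = 2.
Proof.
rewrite /spin_f /spin_pair sum_alpha /spin_sign.
by case: (i.+1 < n)%N; do 2![case: sgn].
Qed.

Lemma spin_f_sign (i : 'I_n) (u v : spinor n) :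
  spin_f i u = Some v -> forall k : 'I_n, spin_sign v k = spin_sign u k - 2 * alpha i k.
Proof.
rewrite /spin_f /alpha => + k; case lt_i1n: (i.+1 < n)%N.
  case: andP => // -[ui /negPf ui1] [<-]; rewrite spin_sign_flip2.
  case: (eqVneq (k : nat) i) => [->|ne_ki]; first by rewrite /spin_sign ui /=; lia.
  case: (eqVneq (k : nat) i.+1) => [->|ne_ki1]; first by rewrite /spin_sign ui1 /=; lia.
  by rewrite subrr mulr0 subr0.
case: ifP => // /andP[ui ui1] [<-]; rewrite spin_sign_flip2.
case: (eqVneq (k : nat) (n - 2)%N) => [->|ne_k2]; first by rewrite /spin_sign ui /=; lia.
case: (eqVneq (k : nat) (n - 1)%N) => [->|ne_k1].
  by rewrite (_ : (n - 1 == (n - 2).+1)%N) /spin_sign ?ui1 /=; lia.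
have [-> -> ->] : [/\ (k == (n - 2).+1 :> nat) = false, (k.+2 == n)%N = false
  & (k.+1 == n)%N = false] by split; lia.
by rewrite /=; lia.
Qed.

Lemma spin_pair_f (i j : 'I_n) (u v : spinor n) :
  spin_f j u = Some v -> spin_pair i v = spin_pair i u - 2 * cartan i j.
Proof.
move=> /spin_f_sign sign_v; rewrite /spin_pair /cartan mulr_sumr -sumrB.
by apply: eq_bigr => k _; rewrite sign_v mulrBr mulrCA.
Qed.

Lemma spin_path_pairing_ge2 (i : 'I_n) (s : seq 'I_n) (v0 v : spinor n) (h : int) :
  opath (@spin_f n) s v0 = Some v -> 2 <= 2 * h + spin_pair i v ->
  pairing_ge2_before_f i (rev s) h.
Proof.
elim/last_ind: s v h => [|s j IHs] v h //.
rewrite opath_rcons rev_rcons; case path_u: opath => [u|] //= fj_u le2.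
split; last by apply: IHs path_u _; rewrite (spin_pair_f i fj_u) in le2; lia.
move=> eq_ji; subst j; move: le2.
by rewrite (spin_pair_f i fj_u) (spin_f_pair fj_u) cartan_diag; lia.
Qed.

End SpinorCrystal.

Lemma hpair0 (n : nat) (i : 'I_n) : hpair i (0 : weight n) = 0.
Proof. by rewrite /hpair big1 // => j _; rewrite ffunE mulr0. Qed.

Lemma hpair_shiftw (n : nat) (i j : 'I_n) (w : weight n) (k : int) :
  hpair i (shiftw w j k) = hpair i w + cartan i j * k.
Proof.
rewrite /hpair /shiftw; under eq_bigr do rewrite ffunE mulrDr.
rewrite big_split /=; congr (_ + _).
by rewrite (bigD1 j) //= eqxx big1 ?addr0 // => l /negPf ->; rewrite mulr0.
Qed.

Section TensorBi.

Variables (n : nat) (B : crystal n) (i : 'I_n).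
Hypotheses (B_crystal : is_crystal B)
  (eps_nat : forall (j : 'I_n) (b : B), exists e : nat, eps j b = Some e%:Z).

Lemma ft_tensor_Bi0 (x : B) :
  phi i x = Some 0 -> ft i ((x, 0) : tensor B (Bi i)) = Some (x, -1).
Proof. by move=> phix; rewrite /= phix eqxx. Qed.

Lemma ft_tensor_Bim1 (j : 'I_n) (x x' : B) :
  ft j x = Some x' -> (j = i -> 2 <= hpair i (wt x)) ->
  ft j ((x, -1) : tensor B (Bi i)) = Some (x', -1).
Proof.
move=> fx ge2; have [e epsx] := eps_nat j x.
rewrite /= (B_crystal j x).1 epsx /=; case: eqVneq => [eq_ji|]; last by rewrite fx.
subst j; rewrite /= ifF ?fx //; apply/negbTE; rewrite -ltNge.
by have := ge2 erefl; lia.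
Qed.

Lemma opath_ft_tensor_Bim1 (t : seq 'I_n) (x x' : B) :
  opath (@ft n B) t x = Some x' -> pairing_ge2_before_f i t (hpair i (wt x)) ->
  opath (@ft n (tensor B (Bi i))) t ((x, -1) : tensor B (Bi i)) = Some (x', -1).
Proof.
elim: t x => [|j t IHt] x; first by move=> [->].
rewrite opath_cons; case fx: (ft j x) => [x1|] // path_x1 [ge2 ge2_t].
rewrite opath_cons (ft_tensor_Bim1 fx ge2); apply: IHt path_x1 _.
by have [-> _ _] := (B_crystal j x).2.2.1 x1 fx; rewrite hpair_shiftw mulrN1.
Qed.

End TensorBi.

Section BInfinity.

Variables (n : nat) (B : crystal n) (binf : B) (star : B -> B)
  (Psi : 'I_n -> B -> B * int).
Hypothesis HB : is_Binf binf star Psi.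

Lemma Binf_crystal : is_crystal B.
Proof. by case: HB. Qed.

Lemma wt_binf : wt binf = 0.
Proof. by case: HB => _ [[]]. Qed.

Lemma phi_binf (i : 'I_n) : phi i binf = Some 0.
Proof.
have [_ [_ [_ [[eps0 _] _]]]] := HB.
by rewrite (Binf_crystal i binf).1 eps0 wt_binf hpair0.
Qed.

Lemma starK : involutive star.
Proof. by case: HB => _ [_ [_ [_ [_ [_ []]]]]]. Qed.

Lemma star_binf : star binf = binf.
Proof.
have [_ [[_ wt0_binf] [_ [_ [_ [_ [_ [wt_star _]]]]]]]] := HB.
by apply: wt0_binf; rewrite wt_star wt_binf.
Qed.

Lemma Psi_strict (i : 'I_n) : @strict_embedding n B (tensor B (Bi i)) (Psi i).
Proof. by case: HB => _ [_ [_ [_ [/(_ i) []]]]]. Qed.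

Lemma Psi_binf (i : 'I_n) : Psi i binf = (binf, 0).
Proof. by case: HB => _ [_ [_ [_ [/(_ i) [_ []]]]]]. Qed.

Lemma Psi_estar (i : 'I_n) (b : B) : exists c : nat,
  eps i (star b) = Some c%:Z /\
  exists b', iter c (fun ob => obind (estar star i) ob) (Some b) = Some b' /\
             Psi i b = (b', - c%:Z).
Proof. by case: HB => _ [_ [_ [_ [_ [_ [_ [_]]]]]]]. Qed.

Lemma eps_nat (j : 'I_n) (b : B) : exists e : nat, eps j b = Some e%:Z.
Proof. by have [e [epsb _]] := Psi_estar j (star b); rewrite starK in epsb; exists e. Qed.

(* Kashiwara's formula with c = 1: b' = e~_i^* b. *)
Lemma Psi_m1_ft_star (i : 'I_n) (b b' : B) :
  Psi i b = (b', -1) -> ft i (star b') = Some (star b).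
Proof.
move=> Psib; have [c [_ [b'' [iter_b]]]] := Psi_estar i b.
rewrite Psib => -[-> c1]; have {c1} c1 : c = 1%N by lia.
move: iter_b; rewrite c1 /= /estar; case eb: et => [z|] //= [<-].
by rewrite starK; apply/((Binf_crystal i z).2.2.2.1 (star b)).
Qed.

Lemma Psi_ft_path_binf (i : 'I_n) (t : seq 'I_n) (b' : B) :
  opath (@ft n B) t binf = Some b' -> pairing_ge2_before_f i t 0 ->
  exists b, opath (@ft n B) (i :: t) binf = Some b /\ Psi i b = (b', -1).
Proof.
move=> path_b' ge2.
have Psi_ft j x : ft j (Psi i x : tensor B (Bi i)) = omap (Psi i) (ft j x).
  by have [_ /(_ j x) []] := Psi_strict i.
have := opath_map Psi_ft (i :: t) binf.
rewrite Psi_binf opath_cons ft_tensor_Bi0 ?phi_binf //=.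
rewrite (opath_ft_tensor_Bim1 Binf_crystal eps_nat path_b') ?wt_binf ?hpair0 //.
by case: (opath _ (i :: t) binf) => [b|] //= [Psib]; exists b.
Qed.

End BInfinity.

Lemma Phi_rcons (n : nat) (B : Type) (Psi : 'I_n -> B -> B * int)
    (s : seq 'I_n) (i : 'I_n) (b : B) :
  Phi Psi (rcons s i) b =
  ((Phi Psi s (Psi i b).1).1, rcons (Phi Psi s (Psi i b).1).2 (Psi i b).2).
Proof. by rewrite /Phi rev_rcons. Qed.

Lemma opath_fstar (n : nat) (B : crystal n) (star : B -> B) :
  involutive star ->
  forall s x, opath (fstar star) s x = omap star (opath (@ft n B) s (star x)).
Proof.
move=> starK; elim=> [|j t IHt] x; first by rewrite /= starK.
by rewrite !opath_cons /fstar; case: (ft j (star x)) => [y|] //=; rewrite IHt starK.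
Qed.

Lemma Phi_spin_path (n : nat) (n_ge2 : (2 <= n)%N) (B : crystal n) (binf : B)
    (star : B -> B) (Psi : 'I_n -> B -> B * int) (HB : is_Binf binf star Psi)
    (s : seq 'I_n) (v0 v : spinor n) :
  opath (@spin_f n) s v0 = Some v ->
  exists b : B, [/\ opath (@ft n B) (rev s) binf = Some b,
    Phi Psi s b = (binf, nseq (size s) (-1)) & opath (@ft n B) s binf = Some (star b)].
Proof.
elim/last_ind: s v => [|s i IHs] v; first by exists binf; rewrite (star_binf HB).
rewrite opath_rcons; case path_u: opath => [u|] //= fi_u.
have [b' [path_b' Phi_b' path_star_b']] := IHs u path_u.
have ge2 : pairing_ge2_before_f i (rev s) 0.
  by apply: (spin_path_pairing_ge2 n_ge2 path_u); rewrite (spin_f_pair n_ge2 fi_u).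
have [b [path_b Psi_b]] := Psi_ft_path_binf HB path_b' ge2.
exists b; split; first by rewrite rev_rcons.
  by rewrite Phi_rcons Psi_b /= Phi_b' size_rcons -cats1 -addn1 nseqD.
by rewrite opath_rcons path_star_b' /= (Psi_m1_ft_star HB Psi_b).
Qed.

Theorem proposition10p1 (n : nat) (Hn : (4 <= n)%N)
    (B : crystal n) (binf : B) (star : B -> B) (Psi : 'I_n -> B -> B * int)
    (HB : is_Binf binf star Psi)
    (omega : spinor n) (Homega : omega = bLam_nm1 n \/ omega = bLam_n n)
    (s : seq 'I_n) (Hs : opath (@spin_f n) s omega <> None) :
  (exists b : B, opath (fstar star) s binf = Some b /\
                 Phi Psi s b = (binf, nseq (size s) (-1))) /\
  (exists b : B, opath (@ft n B) (rev s) binf = Some b /\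
                 Phi Psi s b = (binf, nseq (size s) (-1))).
Proof.
case path_v: opath Hs => [v|] // _.
have [|b [path_b Phi_b path_star_b]] := Phi_spin_path _ HB path_v; first by lia.
split; exists b; split => //.
by rewrite (opath_fstar (starK HB)) (star_binf HB) path_star_b /= (starK HB).
Qed.
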